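(* Let $G=(V,E,\omega)$ be a weighted directed graph with $V=\{1,\dots,n\}$, let $\lambda_0\in\mathbb{C}$ be an eigenvalue of $M_G$ and let $u=(u_1,\dots,u_n)\in\mathbb{C}^n$ satisfy $M_G u=\lambda_0 u$, $u\neq 0$. Assume that $S=\{m+1,\dots,n\}$ is a $\lambda_0$-structural set of $G$. Then $\lambda_0$ is an eigenvalue of the reduced matrix $R_S(G,\lambda_0)$, and $R_S(G,\lambda_0)\,u_S=\lambda_0\,u_S$, where $u_S=(u_{m+1},\dots,u_n)$ is the restriction of $u$ to $S$.
   Context: Let $G=(V,E,\omega)$ be a weighted directed graph with vertex set $V=\{1,\dots,n\}$, edge set $E\subset V\times V$ and weight function $\omega:E\to\mathbb{C}$; set $\omega(i,j)=0$ whenever $(i,j)\notin E$. Its weighted adjacency matrix is $M_G=(\omega(i,j))_{i,j\in V}$ (acting on column vectors, so $(M_Gu)_i=\sum_j\omega(i,j)u_j$). A path is a sequence $(i_0,\dots,i_p)$ with $p\ge 1$ and $(i_\ell,i_{\ell+1})\in E$ for $0\le \ell\le p-1$, whose vertices are pairwise distinct except that possibly $i_0=i_p$; if $i_0=i_p$ the path is a cycle, and a cycle with $p=1$ is a loop. For $S\subset V$ write $\overline S=V\setminus S$. Given $\lambda\in\mathbb{C}$, a nonempty set $S\subset V$ is a $\lambda$-structural set of $G$ if (i) every cycle of $G$ that is not a loop contains a vertex of $S$, and (ii) $\omega(i,i)\neq\lambda$ for every $i\in\overline S$. A branch of $(G,S)$ is a path $\beta=(i_0,i_1,\dots,i_p)$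 whose interior vertices $i_1,\dots,i_{p-1}$ all lie in $\overline S$; $\mathscr B_{ij}$ denotes the set of branches with $i_0=i$ and $i_p=j$. The weight of a branch is $\omega(\beta,\lambda)=\omega(i_0,i_1)\prod_{\ell=1}^{p-1}\frac{\omega(i_\ell,i_{\ell+1})}{\lambda-\omega(i_\ell,i_\ell)}$. For $i,j\in S$ set $R_{ij}(G,S,\lambda)=\sum_{\beta\in\mathscr B_{ij}}\omega(\beta,\lambda)$; the reduced matrix $R_S(G,\lambda)$ is the $S\times S$ matrix with entries $R_{ij}(G,S,\lambda)$, $i,j\in S$. *)

From HB Require Import structures.
From mathcomp Require Import all_boot all_order all_algebra.
Set Implicit Arguments. Unset Strict Implicit. Unset Printing Implicit Defensive.
Import Order.TTheory GRing.Theory Num.Theory.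
Local Open Scope ring_scope.

(* Vertices are 'I_n (vertex i+1 of the paper is the ordinal i).
   The graph is given by an edge relation E and a weight matrix M with
   M i j = 0 whenever (i,j) is not an edge. *)

(* A path (i_0, i_1, ..., i_p) is represented by its start i_0 = i and the
   sequence s = [:: i_1; ...; i_p] (so p = size s >= 1). *)
Definition is_gpath n (E : rel 'I_n) (i : 'I_n) (s : seq 'I_n) : bool :=
  [&& s != [::], path E i s &
      (uniq (i :: s) || (uniq s && (last i s == i)))].

Definition is_gcycle n (E : rel 'I_n) (i : 'I_n) (s : seq 'I_n) : bool :=
  is_gpath E i s && (last i s == i).

Definition is_gloop n (E : rel 'I_n) (i : 'I_n) (s : seq 'I_n) : bool :=
  is_gcycle E i s && (size s == 1%N).

Definition structural_set (C : fieldType) n (E : rel 'I_n) (M : 'M[C]_n)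
    (lam : C) (S : {set 'I_n}) : Prop :=
  [/\ S != set0,
      (forall (i : 'I_n) (s : seq 'I_n),
          is_gcycle E i s -> ~~ is_gloop E i s -> has (mem S) (i :: s))
    & (forall i : 'I_n, i \notin S -> M i i != lam)].

(* branch of (G,S): a path whose interior vertices i_1..i_{p-1} lie outside S *)
Definition is_branch n (E : rel 'I_n) (S : {set 'I_n}) (i : 'I_n)
    (s : seq 'I_n) : bool :=
  is_gpath E i s && all (fun x => x \notin S) (behead (belast i s)).

Fixpoint branch_tail (C : fieldType) n (M : 'M[C]_n) (lam : C)
    (x : 'I_n) (s : seq 'I_n) : C :=
  match s with
  | [::] => 1
  | y :: s' => M x y / (lam - M x x) * branch_tail M lam y s'
  end.

Definition branch_weight (C : fieldType) n (M : 'M[C]_n) (lam : C)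
    (i : 'I_n) (s : seq 'I_n) : C :=
  match s with
  | [::] => 0
  | i1 :: s' => M i i1 * branch_tail M lam i1 s'
  end.

(* R_ij(G,S,lam): sum over all branches from i to j.  Every path has
   length p <= n, so the branches are exactly the sequences s of length
   p in 1..n with is_branch and last i s = j. *)
Definition reduced_entry (C : fieldType) n (E : rel 'I_n) (M : 'M[C]_n)
    (S : {set 'I_n}) (lam : C) (i j : 'I_n) : C :=
  \sum_(p < n) \sum_(t : p.+1.-tuple 'I_n | is_branch E S i t && (last i t == j))
      branch_weight M lam i t.

(* The set S = {m+1, ..., m+k} (0-based: ordinals >= m) of 'I_(m+k). *)
Definition tail_set m k : {set 'I_(m + k)} := [set i : 'I_(m + k) | (m <= i)%N].

(* Reduced matrix R_S(G,lam) for S = tail_set m k, indexed by 'I_k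
   (a : 'I_k corresponds to the vertex rshift m a of S). *)
Definition reduced_matrix (C : fieldType) m k (E : rel 'I_(m + k))
    (M : 'M[C]_(m + k)) (lam : C) : 'M[C]_k :=
  \matrix_(a < k, b < k)
     reduced_entry E M (tail_set m k) lam (rshift m a) (rshift m b).

Definition restrict_tail (C : fieldType) m k (u : 'cV[C]_(m + k)) : 'cV[C]_k :=
  \col_(a < k) u (rshift m a) 0.

From HB Require Import structures.
From mathcomp Require Import all_boot all_order all_algebra.
Set Implicit Arguments.
Unset Strict Implicit.
Unset Printing Implicit Defensive.

Import Order.TTheory GRing.Theory Num.Theory.
Local Open Scope ring_scope.

(* For x outside S we have M x x != lam, so the eigen-equation at x can be
   solved for u_x: u_x = sum_(y != x) M x y / (lam - M x x) * u_y.  Substituting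
   this repeatedly writes u_x as a sum, over the walks that leave x and stop at
   their first vertex in S, of the walk weight times u at that vertex.  The
   substitution terminates because S meets every cycle that is not a loop: a
   walk that avoids S is a simple path, so it has at most #|~: S| vertices.
   Plugging these expansions into the eigen-equation at a vertex i of S groups
   its terms into the branches starting at i, which is the row i of
   R_S u_S = lam u_S.  Finally u_S != 0, since the same expansions show that u
   vanishes as soon as u_S does. *)

Lemma big_tuple_cons (R : Type) (idx : R) (op : Monoid.com_law idx)
    (T : finType) p (F : p.+1.-tuple T -> R) :
  \big[op/idx]_(t : p.+1.-tuple T) F t =
  \big[op/idx]_x \big[op/idx]_(t : p.-tuple T) F [tuple of x :: t].
Proof.
rewrite pair_big /= (reindex (fun xt : T * p.-tuple T => [tuple of xt.1 :: xt.2])) //.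
exists (fun t : p.+1.-tuple T => (thead t, [tuple of behead t])) => [[x t] _ | t _].
  by rewrite theadE; congr pair; apply: val_inj.
by rewrite [in RHS](tuple_eta t).
Qed.

Lemma big_tuple1 (R : Type) (idx : R) (op : Monoid.com_law idx)
    (T : finType) (F : 1.-tuple T -> R) :
  \big[op/idx]_(t : 1.-tuple T) F t = \big[op/idx]_x F [tuple x].
Proof.
rewrite big_tuple_cons; apply: eq_bigr => x _.
by rewrite (big_pred1 [tuple]) // => t; apply/esym/eqP/tuple0.
Qed.

Lemma uniq_path_neq (T : eqType) (x : T) s :
  uniq (x :: s) -> path [rel a b | a != b] x s.
Proof.
elim: s x => //= y s IH x; rewrite inE negb_or => /andP[/andP[-> _] uys].
exact: IH.
Qed.

Lemma sum_rshift (V : nmodType) m k (F : 'I_(m + k) -> V) :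
  \sum_(b < k) F (rshift m b) = \sum_(j in tail_set m k) F j.
Proof.
rewrite [RHS]big_split_ord /= [X in _ = X + _]big_pred0 ?add0r => [|i]; last first.
  by rewrite inE /= leqNgt ltn_ord.
by apply: eq_bigl => b; rewrite inE /= leq_addr.
Qed.

Lemma eigenvalue_col (F : fieldType) n (A : 'M[F]_n) a (v : 'cV_n) :
  A *m v = a *: v -> v != 0 -> eigenvalue A a.
Proof.
move=> Av v0; rewrite /eigenvalue /eigenspace kermx_eq0 row_free_unit.
apply: contra v0 => unitA; have Av0 : (A - a%:M) *m v = 0.
  by rewrite mulmxBl mul_scalar_mx Av subrr.
by rewrite -(mulKmx unitA v) Av0 mulmx0.
Qed.

Section ReducedEigenvector.

Variables (C : fieldType) (n : nat) (E : rel 'I_n) (M : 'M[C]_n).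
Variables (S : {set 'I_n}) (lam : C) (u : 'cV[C]_n).
Hypothesis M_edge : forall i j, ~~ E i j -> M i j = 0.
Hypothesis Mu : M *m u = lam *: u.
Hypothesis S_structural : structural_set E M lam S.

Local Notation neq := [rel a b : 'I_n | a != b].

Lemma eigen_row x : \sum_y M x y * u y 0 = lam * u x 0.
Proof. by have := congr1 (fun v : 'cV[C]_n => v x 0) Mu; rewrite !mxE. Qed.

Lemma avoiding_walk_uniq x w : path E x w -> path neq x w ->
  all (fun z => z \notin S) (x :: w) -> uniq (x :: w).
Proof.
elim: w x => //= y w IH x /andP[Exy Ew] /andP[xy neqw] /andP[xS Sw].
have uw : uniq (y :: w) := IH y Ew neqw Sw.
apply/andP; split=> //; apply/negP => xw.
have [b [w' ew]] : exists b w', y :: w = rcons b x ++ w'.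
  by case/splitPr: xw => b w'; exists b, w'; rewrite cat_rcons.
have b0 : b != [::] by case: b ew => //= -[yx _]; rewrite yx eqxx in xy.
case: S_structural => _ /(_ x (rcons b x)) cycle_S _.
have: has (mem S) (x :: rcons b x).
  apply: cycle_S; last by rewrite /is_gloop size_rcons eqSS size_eq0 (negbTE b0) andbF.
  move: uw; rewrite /is_gcycle /is_gpath last_rcons eqxx ew cat_uniq => /andP[-> _].
  have : path E x (rcons b x ++ w') by rewrite -ew /= Exy.
  by rewrite cat_path => /andP[-> _]; rewrite -size_eq0 size_rcons orbT.
apply/negP; rewrite -all_predC /= xS.
have : all (fun z => z \notin S) (y :: w) := Sw.
by rewrite ew all_cat => /andP[].
Qed.

Lemma avoiding_walk_size x w : path E x w -> path neq x w ->
  all (fun z => z \notin S) (x :: w) -> (size (x :: w) <= #|~: S|)%N.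
Proof.
move=> Ew neqw Sw; rewrite -(card_uniqP (avoiding_walk_uniq Ew neqw Sw)).
by apply/subset_leq_card/subsetP => z /(allP Sw); rewrite inE.
Qed.

Definition step_weight x y := M x y / (lam - M x x).

Lemma branch_tail_eq0 x s : ~~ path E x s -> branch_tail M lam x s = 0.
Proof.
elim: s x => //= y s IH x; rewrite negb_and => /orP[/M_edge -> | /IH ->].
  by rewrite !mul0r.
by rewrite mulr0.
Qed.

Lemma u_outside_expansion x : x \notin S ->
  u x 0 = \sum_(y | y != x) step_weight x y * u y 0.
Proof.
move=> xS; have : M x x != lam by case: S_structural => _ _; apply.
rewrite eq_sym -subr_eq0 => dx; apply: (mulIf dx).
under eq_bigr do rewrite /step_weight mulrAC.
rewrite -mulr_suml divfK //; move: (eigen_row x); rewrite (bigD1 x) //= => ex.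
by rewrite mulrBr [u x 0 * lam]mulrC -ex (mulrC (u x 0)) addrAC subrr add0r.
Qed.

Definition exit_walk x s :=
  [&& path neq x s, last x s \in S & all (fun z => z \notin S) (belast x s)].

Lemma exit_walk_cons x y s :
  exit_walk x (y :: s) = [&& y != x, x \notin S & exit_walk y s].
Proof.
rewrite /exit_walk /= eq_sym -!andbA; congr (_ && _).
by case: (x \in S); rewrite /= ?andbF.
Qed.

Lemma exit_walk_uniq x s : path E x s -> exit_walk x s -> uniq (x :: s).
Proof.
case/lastP: s => // w l; rewrite /exit_walk last_rcons belast_rcons !rcons_path.
move=> /andP[Ew _] /and3P[/andP[neqw _] lS Sw].
rewrite -rcons_cons rcons_uniq (avoiding_walk_uniq Ew neqw Sw) andbT.
by apply/negP => /(allP Sw); rewrite lS.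
Qed.

Definition exit_sum q x := \sum_(t : q.+1.-tuple 'I_n)
  (if exit_walk x t then branch_tail M lam x t * u (last x t) 0 else 0).

Lemma exit_sum_in q y : y \in S -> exit_sum q y = 0.
Proof.
move=> yS; apply: big1 => -[[|z s] //= _].
by rewrite exit_walk_cons yS andbF.
Qed.

Lemma exit_sum0 x : x \notin S ->
  exit_sum 0 x = \sum_(y | (y != x) && (y \in S)) step_weight x y * u y 0.
Proof.
move=> xS; rewrite /exit_sum big_tuple1 [RHS]big_mkcond; apply: eq_bigr => y _.
by rewrite exit_walk_cons xS /exit_walk /= andbT mulr1.
Qed.

Lemma exit_sumS q x : x \notin S -> exit_sum q.+1 x =
  \sum_(y | (y != x) && (y \notin S)) step_weight x y * exit_sum q y.
Proof.
move=> xS; rewrite /exit_sum big_tuple_cons [RHS]big_mkcond; apply: eq_bigr => y _.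
have [->|yx] := eqVneq y x; first by rewrite big1 // => t _; rewrite exit_walk_cons eqxx.
have -> : \sum_(t : q.+1.-tuple 'I_n) (if exit_walk x (y :: t)
    then branch_tail M lam x (y :: t) * u (last x (y :: t)) 0 else 0)
    = step_weight x y * exit_sum q y.
  rewrite mulr_sumr; apply: eq_bigr => t _; rewrite exit_walk_cons yx xS /=.
  by case: ifP => _; rewrite ?mulr0 // /step_weight mulrA.
by case: (boolP (y \in S)) => yS //=; rewrite exit_sum_in ?mulr0.
Qed.

(* The part of u_x not yet expanded after p substitution steps. *)
Fixpoint inner_sum p x :=
  if p is p'.+1 then
    \sum_(y | (y != x) && (y \notin S)) step_weight x y * inner_sum p' y
  else u x 0.

Lemma u_partial_expansion p x : x \notin S ->
  u x 0 = \sum_(q < p) exit_sum q x + inner_sum p x.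
Proof.
elim: p x => [|p IH] x xS; first by rewrite big_ord0 add0r.
rewrite big_ord_recl; under eq_bigr => q _ do rewrite lift0 exit_sumS //.
rewrite (u_outside_expansion xS) exit_sum0 // (bigID (mem S)) /= -addrA; congr (_ + _).
rewrite exchange_big -big_split /=; apply: eq_bigr => y /andP[_ yS].
by rewrite (IH y yS) mulrDr mulr_sumr.
Qed.

Lemma inner_sum_eq0 p x0 w : (#|~: S| <= size w + p)%N ->
  path E x0 w -> path neq x0 w -> all (fun z => z \notin S) (x0 :: w) ->
  inner_sum p (last x0 w) = 0.
Proof.
elim: p w => [|p IH] w le Ew neqw Sw /=.
  by have := leq_trans (avoiding_walk_size Ew neqw Sw) le; rewrite addn0 ltnn.
apply: big1 => y /andP[yx yS].
have [Exy|/M_edge Mxy] := boolP (E (last x0 w) y); last first.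
  by rewrite /step_weight Mxy !mul0r.
have := IH (rcons w y); rewrite last_rcons => -> //; first by rewrite mulr0.
- by rewrite size_rcons addSnnS.
- by rewrite rcons_path Ew.
- by rewrite rcons_path neqw /= eq_sym.
- by rewrite -rcons_cons all_rcons yS.
Qed.

Lemma u_exit_expansion N x : (#|~: S| <= N)%N -> x \notin S ->
  u x 0 = \sum_(q < N) exit_sum q x.
Proof.
move=> le xS; rewrite (u_partial_expansion N xS).
by rewrite (inner_sum_eq0 (x0 := x) (w := [::])) ?addr0 //= xS.
Qed.

Lemma is_branch1 i y : is_branch E S i [:: y] = E i y.
Proof.
by rewrite /is_branch /is_gpath /= !andbT inE eq_sym orNb andbT.
Qed.

Lemma is_branch_exit i y s : i \in S -> path E i (y :: s) ->
  is_branch E S i (y :: s) && (last y s \in S) = exit_walk y s.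
Proof.
move=> iS Eys; have /andP[_ Es] := Eys.
rewrite /is_branch /is_gpath Eys [behead _]/= [last i _]/=; apply/idP/idP.
  case/andP=> /andP[/and3P[_ _ uniq_ys] Sw] lS; rewrite /exit_walk lS Sw !andbT.
  apply: uniq_path_neq.
  by case/orP: uniq_ys => /andP[].
move=> ex; have uys := exit_walk_uniq Es ex; case/and3P: ex => _ lS Sw.
rewrite uys lS Sw !andbT; have [_|li] := eqVneq (last y s) i; first by rewrite orbT.
rewrite andbF orbF cons_uniq uys andbT (lastI y s) mem_rcons inE negb_or.
rewrite (eq_sym i) li -size_eq0 size_rcons /=.
by apply/negP => /(allP Sw); rewrite iS.
Qed.

Definition branch_sum i p := \sum_(t : p.+1.-tuple 'I_n)
  (if is_branch E S i t && (last i t \in S)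
   then branch_weight M lam i t * u (last i t) 0 else 0).

Lemma branch_sum0 i : branch_sum i 0 = \sum_(y in S) M i y * u y 0.
Proof.
rewrite /branch_sum big_tuple1 [RHS]big_mkcond; apply: eq_bigr => y _.
rewrite /= is_branch1 /branch_weight /= mulr1.
by have [//|/M_edge ->] := boolP (E i y); rewrite mul0r if_same.
Qed.

Lemma branch_term_cons i y s : i \in S ->
  (if is_branch E S i (y :: s) && (last y s \in S)
   then branch_weight M lam i (y :: s) * u (last y s) 0 else 0) =
  M i y * (if exit_walk y s then branch_tail M lam y s * u (last y s) 0 else 0).
Proof.
move=> iS; have [Eys|nEys] := boolP (path E i (y :: s)).
  by rewrite is_branch_exit //; case: ifP; rewrite ?mulr0 // mulrA.
have w0 : M i y * branch_tail M lam y s = 0.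
  move: nEys; rewrite /= negb_and => /orP[/M_edge -> | /branch_tail_eq0 ->].
    by rewrite mul0r.
  by rewrite mulr0.
by rewrite /branch_weight w0 mul0r if_same; case: ifP; rewrite ?mulr0 // mulrA w0 mul0r.
Qed.

Lemma branch_sumS i q : i \in S ->
  branch_sum i q.+1 = \sum_(y | y \notin S) M i y * exit_sum q y.
Proof.
move=> iS; rewrite /branch_sum big_tuple_cons [RHS]big_mkcond.
apply: eq_bigr => y _; under eq_bigr do rewrite /= branch_term_cons //.
rewrite -mulr_sumr -/(exit_sum q y).
by case: (boolP (y \in S)) => yS //=; rewrite exit_sum_in ?mulr0.
Qed.

Lemma branch_sum_total N i : (#|~: S| < N)%N -> i \in S ->
  \sum_(p < N) branch_sum i p = lam * u i 0.
Proof.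
case: N => // N le iS; rewrite big_ord_recl.
under eq_bigr => q _ do rewrite lift0 branch_sumS //.
rewrite branch_sum0 -eigen_row [RHS](bigID (mem S)) /=; congr (_ + _).
rewrite exchange_big; apply: eq_bigr => y yS.
by rewrite -mulr_sumr -u_exit_expansion.
Qed.

Lemma reduced_entry_sum i :
  \sum_(j in S) reduced_entry E M S lam i j * u j 0 = \sum_(p < n) branch_sum i p.
Proof.
under eq_bigr do rewrite /reduced_entry mulr_suml.
rewrite exchange_big; apply: eq_bigr => p _.
under eq_bigr do rewrite mulr_suml big_mkcond.
rewrite exchange_big; apply: eq_bigr => t _.
case: (is_branch E S i t); last by rewrite big1.
rewrite -big_mkcondr; case: (boolP (last i t \in S)) => lS.
  by rewrite (big_pred1 (last i t)) // => j; rewrite /= eq_sym andbC; case: eqP => // ->.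
by rewrite big_pred0 // => j; apply: contraNF lS => /andP[jS /eqP ->].
Qed.

Lemma reduced_eigen_row i : i \in S ->
  \sum_(j in S) reduced_entry E M S lam i j * u j 0 = lam * u i 0.
Proof.
move=> iS; rewrite reduced_entry_sum branch_sum_total //.
rewrite -[X in (_ < X)%N]card_ord -(cardsC S) -[X in (X < _)%N]add0n ltn_add2r.
by rewrite card_gt0; apply/set0Pn; exists i.
Qed.

Lemma eigenvector_eq0_on_S : (forall j, j \in S -> u j 0 = 0) -> u = 0.
Proof.
move=> uS; apply/matrixP => x z; rewrite ord1 mxE.
have [/uS //|xS] := boolP (x \in S).
rewrite (u_exit_expansion (leqnn _) xS) big1 // => q _.
by apply: big1 => t _; case: ifP => // /and3P[_ /uS -> _]; rewrite mulr0.
Qed.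

End ReducedEigenvector.

Theorem mainTheorem1 (C : numClosedFieldType) (m k : nat)
    (E : rel 'I_(m + k)) (M : 'M[C]_(m + k))
    (hM : forall i j : 'I_(m + k), ~~ E i j -> M i j = 0)
    (lam0 : C) (u : 'cV[C]_(m + k))
    (hu : M *m u = lam0 *: u) (hu0 : u != 0)
    (hS : structural_set E M lam0 (tail_set m k)) :
  eigenvalue (reduced_matrix E M lam0) lam0 /\
  reduced_matrix E M lam0 *m restrict_tail u = lam0 *: restrict_tail u.
Proof.
have Ru : reduced_matrix E M lam0 *m restrict_tail u = lam0 *: restrict_tail u.
  apply/matrixP => a z; rewrite ord1 !mxE; under eq_bigr do rewrite !mxE.
  rewrite (sum_rshift (fun j => reduced_entry E M _ lam0 (rshift m a) j * u j 0)).
  by rewrite (reduced_eigen_row hM hu hS) // inE leq_addr.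
split=> //; apply: eigenvalue_col Ru _; apply: contra hu0 => /eqP uS0.
apply/eqP/(eigenvector_eq0_on_S hM hu hS) => j; rewrite inE leqNgt.
case: splitP => // b /= jE _; have -> : j = rshift m b by apply: val_inj.
by have := congr1 (fun v : 'cV_k => v b 0) uS0; rewrite !mxE.
Qed.
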